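(* Let $n\ge2$, $r\ge1$, and let $V_1,\dots,V_r\in\mathrm{Mat}(n,\mathbb{C})$ satisfy $\operatorname{tr}(V_s^*V_m)=\delta_{sm}$. Define $$P_{\mathcal T}=\sum_{s=1}^r\sum_{a,b,c,d=1}^n (V_s)_{ab}(\bar V_s)_{cd}\,E^{(n)}_{ac}\otimes E^{(n)}_{bd}\in\mathrm{Mat}(n^2,\mathbb{C}),$$ $$A_{\mathcal T}=\sum_{s,m=1}^r E^{(r)}_{sm}\otimes\Big(\sum_{i=1}^r V_i\bar V_sV_m^tV_i^*\Big)\in\mathrm{Mat}(rn,\mathbb{C}).$$ Then for all integers $m\ge1$, $$\operatorname{tr}_3\big(((P_{\mathcal T})_1(P_{\mathcal T})_2)^m\big)=\operatorname{tr}\big(A_{\mathcal T}^m\big),$$ where $(P_{\mathcal T})_1=P_{\mathcal T}\otimes I_n$ and $(P_{\mathcal T})_2=I_n\otimes P_{\mathcal T}$.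
   Context: $E^{(p)}_{ab}\in\mathrm{Mat}(p,\mathbb{C})$ is the matrix unit with $(E^{(p)}_{ab})_{ij}=\delta_{ai}\delta_{bj}$; $\bar V$ is the entrywise complex conjugate, $V^t$ the transpose, $V^*$ the conjugate transpose; $\otimes$ is the Kronecker product; $\operatorname{tr}_3$ is the trace on $\mathrm{Mat}(n^3,\mathbb{C})$. (Such $P_{\mathcal T}$ is an orthogonal projection of rank $r$.) *)

From HB Require Import structures.
From mathcomp Require Import all_boot all_order all_algebra.
From mathcomp Require Export mxtens.
Set Implicit Arguments. Unset Strict Implicit. Unset Printing Implicit Defensive.
Import Order.TTheory GRing.Theory Num.Theory.
Local Open Scope ring_scope.

Definition conjmx (C : numClosedFieldType) m n (V : 'M[C]_(m, n)) : 'M[C]_(m, n) :=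
  map_mx (@Num.conj C) V.

Definition adjmx (C : numClosedFieldType) m n (V : 'M[C]_(m, n)) : 'M[C]_(n, m) :=
  (conjmx V)^T.

Definition P_T (C : numClosedFieldType) (n r : nat) (V : 'I_r -> 'M[C]_n)
  : 'M[C]_(n * n) :=
  \sum_(s < r) \sum_(a < n) \sum_(b < n) \sum_(c < n) \sum_(d < n)
     (V s a b * conjmx (V s) c d) *: (delta_mx a c *t delta_mx b d).

Definition A_T (C : numClosedFieldType) (n r : nat) (V : 'I_r -> 'M[C]_n)
  : 'M[C]_(r * n) :=
  \sum_(s < r) \sum_(m < r)
     (delta_mx s m *t
        (\sum_(i < r) V i *m conjmx (V s) *m (V m)^T *m adjmx (V i))).

Definition leg1 (C : numClosedFieldType) (n : nat) (P : 'M[C]_(n * n))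
  : 'M[C]_(n * n * n) := P *t (1%:M : 'M[C]_n).

Definition leg2 (C : numClosedFieldType) (n : nat) (P : 'M[C]_(n * n))
  : 'M[C]_(n * n * n) :=
  castmx (mulnA n n n, mulnA n n n) ((1%:M : 'M[C]_n) *t P).

From Pilot Require Import Defs.
From HB Require Import structures.
From mathcomp Require Import all_boot all_order all_algebra.
From mathcomp Require Import mxtens.
Set Implicit Arguments. Unset Strict Implicit. Unset Printing Implicit Defensive.
Import Order.TTheory GRing.Theory Num.Theory.
Local Open Scope ring_scope.

(* Let W_T be the n^2 x r matrix whose s-th column is vec V_s, so that P_T = W_T W_T^*.
   Then (P_T)_1 = B_T B_T^* with B_T = W_T (x) I_n, (P_T)_2 = C_T C_T^* with C_T a
   column permutation of I_n (x) W_T, and A_T = K_T^* K_T with K_T = B_T^* C_T.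
   Since tr((XY)^m) = tr((YX)^m) for m > 0, the m-th powers of B B^* C C^*,
   B^* C C^* B, K K^* and K^* K all have the same trace. *)

Notation idx := mxtens_index.

Lemma mxtrace_exp_mulC (R : comPzRingType) p q (X : 'M[R]_(p, q)) (Y : 'M[R]_(q, p)) m :
  (0 < m)%N -> \tr ((X *m Y) ^+ m) = \tr ((Y *m X) ^+ m).
Proof.
case: m => // m _.
have expXY j : (X *m Y) ^+ j.+1 = X *m (Y *m X) ^+ j *m Y.
  elim: j => [|j IHj]; first by rewrite expr1 expr0 mulmx1.
  by rewrite exprSr IHj exprSr -!mulmxE !mulmxA.
by rewrite expXY mxtrace_mulC mulmxA mulmxE -exprS.
Qed.

Lemma sum_mxtens_index (R : nmodType) m n (F : 'I_(m * n) -> R) :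
  \sum_k F k = \sum_(i < m) \sum_(j < n) F (idx (i, j)).
Proof.
rewrite pair_big /= (reindex (@mxtens_index m n)) /=.
  by apply: eq_bigr => -[i j].
by exists (@mxtens_unindex m n) => k _; rewrite (mxtens_indexK, mxtens_unindexK).
Qed.

Lemma sum_delta (R : pzSemiRingType) n (i : 'I_n) (F : 'I_n -> R) :
  \sum_j (j == i)%:R * F j = F i.
Proof.
rewrite (bigD1 i) //= eqxx mul1r big1 ?addr0 // => j /negbTE->.
by rewrite mul0r.
Qed.

Lemma eq_mxtens_index m n (i i' : 'I_m) (j j' : 'I_n) :
  (idx (i, j) == idx (i', j')) = (i == i') && (j == j').
Proof. by rewrite (inj_eq (can_inj (@mxtens_indexK m n))). Qed.

Lemma tens_delta_mx (R : comPzRingType) m n p q (i : 'I_m) (j : 'I_n) (k : 'I_p) (l : 'I_q) :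
  delta_mx i j *t delta_mx k l = delta_mx (idx (i, k)) (idx (j, l)) :> 'M[R]_(_, _).
Proof.
apply/matrixP => u v; case: (mxtens_indexP u) => i' k'; case: (mxtens_indexP v) => j' l'.
by rewrite tensmxE !mxE !eq_mxtens_index -natrM mulnb andbACA.
Qed.

Lemma sum_delta_tens_mxE (R : comPzRingType) r n (M : 'I_r -> 'I_r -> 'M[R]_n) s e m f :
  (\sum_(s' < r) \sum_(m' < r) (delta_mx s' m' *t M s' m')) (idx (s, e)) (idx (m, f)) =
  M s m e f.
Proof.
rewrite summxE (eq_bigr (fun s' => (s' == s)%:R * M s' m e f)) ?sum_delta // => s' _.
rewrite summxE (eq_bigr (fun m' => (m' == m)%:R * ((s' == s)%:R * M s' m' e f))).
  by rewrite sum_delta.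
move=> m' _; rewrite tensmxE mxE.
by rewrite -mulnb natrM mulrCA mulrA (eq_sym s') (eq_sym m').
Qed.

Lemma matrix_sum_tens_delta (R : comPzRingType) m n p q (X : 'M[R]_(m * n, p * q)) :
  X = \sum_(a < m) \sum_(b < n) \sum_(c < p) \sum_(d < q)
        X (idx (a, b)) (idx (c, d)) *: (delta_mx a c *t delta_mx b d).
Proof.
rewrite {1}[X]matrix_sum_delta sum_mxtens_index; do 2 apply: eq_bigr => ? _.
by rewrite sum_mxtens_index; do 2 apply: eq_bigr => ? _; rewrite tens_delta_mx.
Qed.

Lemma sum_scale_tens_delta_mxE (R : comPzRingType) m n p q
    (F : 'I_m -> 'I_n -> 'I_p -> 'I_q -> R) a b c d :
  (\sum_(a' < m) \sum_(b' < n) \sum_(c' < p) \sum_(d' < q)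
     F a' b' c' d' *: (delta_mx a' c' *t delta_mx b' d')) (idx (a, b)) (idx (c, d)) =
  F a b c d.
Proof.
pose X : 'M[R]_(m * n, p * q) := \matrix_(i, j)
  F (mxtens_unindex i).1 (mxtens_unindex i).2 (mxtens_unindex j).1 (mxtens_unindex j).2.
have -> : \sum_a' \sum_b' \sum_c' \sum_d' F a' b' c' d' *: (delta_mx a' c' *t delta_mx b' d') = X.
  by rewrite [RHS]matrix_sum_tens_delta; do 4 apply: eq_bigr => ? _; rewrite mxE !mxtens_indexK.
by rewrite mxE !mxtens_indexK.
Qed.

Lemma cast_ord_mxtens_indexA n (a b e : 'I_n) :
  cast_ord (esym (mulnA n n n)) (idx (idx (a, b), e)) = idx (a, idx (b, e)).
Proof. by apply: val_inj => /=; rewrite mulnDl -mulnA addnA. Qed.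

(* [Defs.conjmx] is qualified because mxalgebra exports an unrelated [conjmx]. *)
Section Adjoint.
Variable C : numClosedFieldType.

Lemma conjmxM p q k (X : 'M[C]_(p, q)) (Y : 'M[C]_(q, k)) :
  Defs.conjmx (X *m Y) = Defs.conjmx X *m Defs.conjmx Y.
Proof. exact: map_mxM. Qed.

Lemma conjmxK p q : involutive (@Defs.conjmx C p q).
Proof. by move=> X; apply/matrixP => i j; rewrite !mxE conjCK. Qed.

Lemma adjmxE p q (X : 'M[C]_(p, q)) i j : adjmx X i j = (X j i)^*.
Proof. by rewrite !mxE. Qed.

Lemma adjmxM p q k (X : 'M[C]_(p, q)) (Y : 'M[C]_(q, k)) :
  adjmx (X *m Y) = adjmx Y *m adjmx X.
Proof. by rewrite /adjmx conjmxM trmx_mul. Qed.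

Lemma adjmxK p q : cancel (@adjmx C p q) (@adjmx C q p).
Proof. by move=> X; apply/matrixP => i j; rewrite !mxE conjCK. Qed.

Lemma adjmx_tens m n p q (X : 'M[C]_(m, n)) (Y : 'M[C]_(p, q)) :
  adjmx (X *t Y) = adjmx X *t adjmx Y.
Proof. by rewrite /adjmx /Defs.conjmx map_mxT trmx_tens. Qed.

Lemma adjmx1 p : adjmx (1%:M : 'M[C]_p) = 1%:M.
Proof. by rewrite /adjmx /Defs.conjmx map_mx1 trmx1. Qed.

End Adjoint.

Section Legs.
Variable C : numClosedFieldType.

Lemma leg1_gram p q (X : 'M[C]_(p * p, q)) :
  leg1 (X *m adjmx X) = (X *t 1%:M) *m adjmx (X *t 1%:M).
Proof. by rewrite /leg1 adjmx_tens adjmx1 tensmx_mul mulmx1. Qed.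

Lemma leg2E n (P : 'M[C]_(n * n)) a b e c d f :
  leg2 P (idx (idx (a, b), e)) (idx (idx (c, d), f)) =
  (a == c)%:R * P (idx (b, e)) (idx (d, f)).
Proof. by rewrite castmxE /= !cast_ord_mxtens_indexA tensmxE mxE. Qed.

End Legs.

Section Factorization.
Variables (C : numClosedFieldType) (n r : nat) (V : 'I_r -> 'M[C]_n).

Definition W_T : 'M[C]_(n * n, r) :=
  \matrix_(i, s) V s (mxtens_unindex i).1 (mxtens_unindex i).2.

Definition B_T : 'M[C]_(n * n * n, r * n) := W_T *t 1%:M.

(* The columns of I_n (x) W_T, reordered from (g, s) to (s, g) so that K_T is
   indexed like A_T. *)
Definition C_T : 'M[C]_(n * n * n, r * n) := \matrix_(i, j)
  (((mxtens_unindex (mxtens_unindex i).1).1 == (mxtens_unindex j).2)%:R *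
   V (mxtens_unindex j).1 (mxtens_unindex (mxtens_unindex i).1).2 (mxtens_unindex i).2).

Definition K_T : 'M[C]_(r * n) := adjmx B_T *m C_T.

Lemma W_TE a b s : W_T (idx (a, b)) s = V s a b.
Proof. by rewrite mxE mxtens_indexK. Qed.

Lemma B_TE a b e s g : B_T (idx (idx (a, b), e)) (idx (s, g)) = V s a b * (e == g)%:R.
Proof. by rewrite tensmxE W_TE mxE. Qed.

Lemma C_TE a b e s g : C_T (idx (idx (a, b), e)) (idx (s, g)) = (a == g)%:R * V s b e.
Proof. by rewrite mxE !mxtens_indexK. Qed.

Lemma P_TE a b c d : P_T V (idx (a, b)) (idx (c, d)) = \sum_s V s a b * (V s c d)^*.
Proof.
by rewrite summxE; apply: eq_bigr => s _; rewrite sum_scale_tens_delta_mxE mxE.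
Qed.

Lemma P_T_gram : P_T V = W_T *m adjmx W_T.
Proof.
apply/matrixP => i j; case: (mxtens_indexP i) => a b; case: (mxtens_indexP j) => c d.
by rewrite P_TE mxE; apply: eq_bigr => s _; rewrite adjmxE !W_TE.
Qed.

Lemma leg1_P_T : leg1 (P_T V) = B_T *m adjmx B_T.
Proof. by rewrite P_T_gram leg1_gram. Qed.

Lemma leg2_P_T : leg2 (P_T V) = C_T *m adjmx C_T.
Proof.
apply/matrixP => i j.
case: (mxtens_indexP i) => ab e; case: (mxtens_indexP ab) => a b.
case: (mxtens_indexP j) => cd f; case: (mxtens_indexP cd) => c d.
rewrite leg2E P_TE mxE sum_mxtens_index mulr_sumr; apply: eq_bigr => s _.
rewrite (eq_bigr (fun g => (g == a)%:R * ((g == c)%:R * (V s b e * (V s d f)^*)))).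
  by rewrite sum_delta.
move=> g _; rewrite adjmxE !C_TE rmorphM /= conjC_nat mulrACA -mulrA.
by rewrite (eq_sym a) (eq_sym c).
Qed.

Lemma K_TE s e t f : K_T (idx (s, e)) (idx (t, f)) = (Defs.conjmx (V s) *m V t) f e.
Proof.
rewrite !mxE !sum_mxtens_index.
rewrite (eq_bigr (fun a => (a == f)%:R *
  \sum_b \sum_g (g == e)%:R * ((V s a b)^* * V t b g))); last first.
  move=> a _; rewrite mulr_sumr; apply: eq_bigr => b _; rewrite mulr_sumr.
  apply: eq_bigr => g _; rewrite adjmxE B_TE C_TE rmorphM /= conjC_nat.
  by rewrite mulrCA; congr (_ * _); rewrite -mulrA mulrCA.
by rewrite (@sum_delta _ _ f); apply: eq_bigr => b _; rewrite sum_delta mxE.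
Qed.

Lemma A_T_gram : A_T V = adjmx K_T *m K_T.
Proof.
apply/matrixP => i j; case: (mxtens_indexP i) => s e; case: (mxtens_indexP j) => m f.
rewrite sum_delta_tens_mxE summxE mxE sum_mxtens_index; apply: eq_bigr => t _.
have -> : V t *m Defs.conjmx (V s) *m (V m)^T *m adjmx (V t) =
    Defs.conjmx (Defs.conjmx (V t) *m V s) *m (Defs.conjmx (V t) *m V m)^T.
  by rewrite conjmxM conjmxK trmx_mul !mulmxA.
by rewrite mxE; apply: eq_bigr => g _; rewrite adjmxE !K_TE !mxE.
Qed.

End Factorization.

Theorem lemma5 (C : numClosedFieldType) (n r : nat) (V : 'I_r -> 'M[C]_n) :
  (2 <= n)%N -> (1 <= r)%N ->
  (forall s m : 'I_r, \tr (adjmx (V s) *m V m) = (s == m)%:R) ->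
  forall m : nat, (1 <= m)%N ->
    \tr ((leg1 (P_T V) *m leg2 (P_T V)) ^+ m) = \tr ((A_T V) ^+ m).
Proof.
move=> _ _ _ m m_gt0.
rewrite leg1_P_T leg2_P_T A_T_gram -mulmxA mxtrace_exp_mulC //.
have -> : adjmx (B_T V) *m (C_T V *m adjmx (C_T V)) *m B_T V = K_T V *m adjmx (K_T V).
  by rewrite adjmxM adjmxK !mulmxA.
exact: mxtrace_exp_mulC.
Qed.
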